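(* Let $X$ be a subshift and $n\ge2$. If $a_1\dots a_n$ is a significant block of $X$, then $a_1\dots a_{n-1}$ is also a significant block of $X$.
   Context: Let $\mathcal A$ be a finite alphabet and $\sigma$ the shift, $(\sigma x)_i=x_{i+1}$. For a one-sided subshift $X^+\subseteq\mathcal A^{\mathbb N}$ (nonempty, closed, $\sigma$-invariant), the natural extension is $\tilde X=\{x\in\mathcal A^{\mathbb Z}: x_px_{p+1}\dots\in X^+\ \forall p\in\mathbb Z\}$; for a two-sided subshift $X$, $X^+$ is the set of right rays of its points and $\tilde X=X$. For a block $a_{-n}\dots a_0$ occurring in $\tilde X$, $\mathrm{fol}(a_{-n}\dots a_0)=\{b_0b_1\dots\in X^+:\exists b\in\tilde X,\ b_{-n}\dots b_0=a_{-n}\dots a_0\}$. A block $a_{-n}\dots a_0$ occurring in $\tilde X$ with $n\ge1$ is a significant block of $X$ if $\mathrm{fol}(a_{-n}\dots a_0)\subsetneq\mathrm{fol}(a_{-n+1}\dots a_0)$; single symbols occurring in $\tilde X$ are also counted as significant. *)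

From Stdlib Require Import ZArith.
From mathcomp Require Import all_boot.
Set Implicit Arguments. Unset Strict Implicit. Unset Printing Implicit Defensive.

Section Shifts.
Variable A : finType.

Definition oseq := nat -> A.
Definition tseq := Z -> A.

(* closedness in the product topology, written out combinatorially *)
Definition oclosed (X : oseq -> Prop) : Prop :=
  forall y : oseq,
    (forall k : nat, exists z, X z /\ forall i : nat, (i < k)%N -> z i = y i) -> X y.

Definition tclosed (X : tseq -> Prop) : Prop :=
  forall x : tseq,
    (forall k : nat, exists z, X z /\
       forall i : Z, (- Z.of_nat k <= i <= Z.of_nat k)%Z -> z i = x i) -> X x.

Definition one_sided_subshift (Xp : oseq -> Prop) : Prop :=
  (exists y, Xp y) /\ oclosed Xp /\
  (forall y, Xp y -> Xp (fun k => y k.+1)).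

Definition two_sided_subshift (X : tseq -> Prop) : Prop :=
  (exists x, X x) /\ tclosed X /\
  (forall x, X x -> X (fun i => x (i + 1)%Z)) /\
  (forall x, X x -> X (fun i => x (i - 1)%Z)).

Definition nat_ext (Xp : oseq -> Prop) : tseq -> Prop :=
  fun x => forall p : Z, Xp (fun k => x (p + Z.of_nat k)%Z).

Definition rays (X : tseq -> Prop) : oseq -> Prop :=
  fun y => exists x, X x /\ forall k : nat, x (Z.of_nat k) = y k.

Definition occurs (Xt : tseq -> Prop) (w : seq A) : Prop :=
  exists x p, Xt x /\ forall i : nat, (i < size w)%N -> x (p + Z.of_nat i)%Z = nth (x 0%Z) w i.

(* fol(w), with w = a_{-n} ... a_0 placed so that its last letter sits at 0 *)
Definition fol (Xp : oseq -> Prop) (Xt : tseq -> Prop) (w : seq A) : oseq -> Prop :=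
  fun y => Xp y /\ exists b : tseq, Xt b /\
    (forall i : nat, (i < size w)%N ->
       b (Z.of_nat i - Z.of_nat (size w).-1)%Z = nth (b 0%Z) w i) /\
    (forall k : nat, b (Z.of_nat k) = y k).

Definition strict_subset (P Q : oseq -> Prop) : Prop :=
  (forall y, P y -> Q y) /\ exists y, Q y /\ ~ P y.

Definition significant (Xp : oseq -> Prop) (Xt : tseq -> Prop) (w : seq A) : Prop :=
  occurs Xt w /\
  (size w = 1 \/ ((2 <= size w)%N /\ strict_subset (fol Xp Xt w) (fol Xp Xt (behead w)))).

End Shifts.

(** If [y] lies in fol(a_2 ... a_n) but not in fol(a_1 ... a_n), take a point [b]
    carrying a_2 ... a_n at positions -n+2 ... 0 and the ray [y] from 0 on, and
    shift it one step to the right.  Its ray a_{n-1} y lies in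
    fol(a_2 ... a_{n-1}); if it also lay in fol(a_1 ... a_{n-1}), shifting the
    corresponding point back would put a_1 ... a_{n-1} a_n in front of [y],
    since the ray a_{n-1} y carries a_n = y_0 at position 1. *)

From Stdlib Require Import ZArith Lia FunctionalExtensionality.
From mathcomp Require Import all_boot zify.

Section SignificantPrefix.
Variable A : finType.

Definition ends_with (b : tseq A) (w : seq A) : Prop :=
  forall i : nat, (i < size w)%N ->
    b (Z.of_nat i - Z.of_nat (size w).-1)%Z = nth (b 0%Z) w i.

Definition scons (c : A) (y : oseq A) : oseq A :=
  fun k => if k is k'.+1 then y k' else c.

Lemma ends_with_rcons b u a :
  ends_with b (rcons u a) <-> ends_with (fun i => b (i - 1)%Z) u /\ b 0%Z = a.
Proof.
rewrite /ends_with size_rcons /=; split.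
  move=> Hw; split; last by have := Hw (size u) (ltnSn _);
    rewrite nth_rcons ltnn eqxx Z.sub_diag.
  move=> i Hi; rewrite (set_nth_default (b 0%Z)) //.
  have := Hw i (ltnW Hi); rewrite nth_rcons Hi => <-.
  by congr b; move: (ltn_predK Hi); lia.
move=> [Hu <-] i; rewrite ltnS leq_eqVlt nth_rcons => /orP[/eqP->|Hi].
  by rewrite ltnn eqxx Z.sub_diag.
rewrite Hi; have := Hu i Hi; rewrite (set_nth_default (b 0%Z)) // => <-.
by congr b; move: (ltn_predK Hi); lia.
Qed.

Lemma ends_with_last b w x0 : (0 < size w)%N -> ends_with b w -> b 0%Z = last x0 w.
Proof.
move=> Hw0 Hw; rewrite -(nth_last x0) (set_nth_default (b 0%Z)); last by rewrite prednK.
by rewrite -Hw ?prednK // Z.sub_diag.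
Qed.

Lemma ends_with_behead b w : ends_with b w -> ends_with b (behead w).
Proof.
case: w => [|a w] //= Hw i Hi.
rewrite -[nth _ w i]/(nth (b 0%Z) (a :: w) i.+1) -Hw //.
by congr b; change (size (a :: w)).-1 with (size w); lia.
Qed.

Variables (Xp : oseq A -> Prop) (Xt : tseq A -> Prop).
Hypothesis shift_left : forall x, Xt x -> Xt (fun i => x (i + 1)%Z).
Hypothesis shift_right : forall x, Xt x -> Xt (fun i => x (i - 1)%Z).
Hypothesis rays_in : forall x, Xt x -> Xp (fun k => x (Z.of_nat k)).

Lemma fol_behead w y : fol Xp Xt w y -> fol Xp Xt (behead w) y.
Proof.
move=> [Hy [b [Hb [Hw Hr]]]]; split=> //.
by exists b; split=> //; split=> //; exact: ends_with_behead.
Qed.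

Lemma fol_head_ray w y x0 : (0 < size w)%N -> fol Xp Xt w y -> y 0 = last x0 w.
Proof. by move=> Hw0 [_ [b [_ [Hw <-]]]]; exact: ends_with_last. Qed.

Lemma fol_rcons_scons u a y x0 : (0 < size u)%N ->
  fol Xp Xt (rcons u a) y -> fol Xp Xt u (scons (last x0 u) y).
Proof.
move=> Hu0 [_ [b [Hb [/ends_with_rcons [Hu _] Hr]]]].
have Hray : forall k : nat, b (Z.of_nat k - 1)%Z = scons (last x0 u) y k.
  case=> [|k]; first exact: ends_with_last Hu.
  by rewrite /scons -Hr; congr b; lia.
split; first by rewrite -(functional_extensionality _ _ Hray);
  exact: rays_in _ (shift_right _ Hb).
by exists (fun i => b (i - 1)%Z); split; [exact: shift_right|split].
Qed.

Lemma fol_scons_rcons u a c y : Xp y -> y 0 = a ->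
  fol Xp Xt u (scons c y) -> fol Xp Xt (rcons u a) y.
Proof.
move=> Hy Hya [_ [b [Hb [Hu Hr]]]]; split=> //.
exists (fun i => b (i + 1)%Z); split; first exact: shift_left.
split; last by move=> k; rewrite -[y k]/(scons c y k.+1) -Hr; congr b; lia.
apply/(ends_with_rcons (fun i => b (i + 1)%Z)); split; last by rewrite -Hya (Hr 1).
suff -> : (fun i => b (i - 1 + 1)%Z) = b by [].
by apply: functional_extensionality => i; rewrite Z.sub_add.
Qed.

Lemma occurs_rcons u a : occurs Xt (rcons u a) -> occurs Xt u.
Proof.
move=> [x [p [Hx Hw]]]; exists x, p; split=> // i Hi.
by rewrite Hw ?size_rcons ?nth_rcons ?Hi // ltnW.
Qed.

Lemma significant_rcons u a : (0 < size u)%N ->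
  significant Xp Xt (rcons u a) -> significant Xp Xt u.
Proof.
move=> Hu0 [Hocc Hsig]; split; first exact: occurs_rcons Hocc.
case: Hsig => [|[_ [_ [y [Hy Hny]]]]]; first by rewrite size_rcons; case: u Hu0 Hocc.
case: u Hu0 Hocc Hy Hny => [|a1 [|a2 v]] // _ _ Hy Hny; [by left|right].
split=> //; split; first exact: fol_behead.
exists (scons (last a2 v) y); split; first exact: (fol_rcons_scons (a2 :: v) a y a2) Hy.
have Hya : y 0 = a by rewrite (fol_head_ray (rcons (a2 :: v) a) y a) ?last_rcons.
by case: Hy => Hyp _ /(fol_scons_rcons _ _ _ _ Hyp Hya).
Qed.

Lemma significant_take_pred w : (2 <= size w)%N ->
  significant Xp Xt w -> significant Xp Xt (take (size w).-1 w).
Proof.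
case/lastP: w => [|u a] //; rewrite size_rcons -cats1 take_size_cat // cats1.
exact: significant_rcons.
Qed.

End SignificantPrefix.

Lemma nat_ext_shift (A : finType) (Xp : oseq A -> Prop) (x : tseq A) (d : Z) :
  nat_ext Xp x -> nat_ext Xp (fun i => x (i + d)%Z).
Proof.
move=> Hx p; have := Hx (p + d)%Z.
suff -> : (fun k : nat => x (p + d + Z.of_nat k)%Z) = (fun k => x (p + Z.of_nat k + d)%Z) by [].
by apply: functional_extensionality => k; congr x; lia.
Qed.

Theorem lemma3p9 (A : finType) :
  (forall (Xp : oseq A -> Prop) (w : seq A),
     one_sided_subshift Xp -> (2 <= size w)%N ->
     significant Xp (nat_ext Xp) w ->
     significant Xp (nat_ext Xp) (take (size w).-1 w)) /\
  (forall (X : tseq A -> Prop) (w : seq A),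
     two_sided_subshift X -> (2 <= size w)%N ->
     significant (rays X) X w ->
     significant (rays X) X (take (size w).-1 w)).
Proof.
split.
  move=> Xp w _; apply: significant_take_pred => x Hx.
  - exact: nat_ext_shift.
  - exact: nat_ext_shift _ _ _ (-1)%Z Hx.
  - exact: (Hx 0%Z).
move=> X w [_ [_ [Hup Hdn]]]; apply: significant_take_pred => // x Hx.
by exists x.
Qed.
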